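(* Let $n,m,V$ be positive integers, let $\lambda>0$ and $\beta_\lambda>0$. For each $v\in\{1,\dots,V\}$ let $\mathbf{Z}_v\in\Delta^n_m$ and let $\mathbf{T}_v\in\mathbb{R}^{m\times m}$ satisfy $\mathbf{T}_v^\top\mathbf{T}_v=\mathbf{I}_m$. Let $\mathbf{H}\in\mathbb{R}^{n\times m}$ be a fixed matrix with nonnegative entries. For $\boldsymbol{\alpha}=(\alpha_1,\dots,\alpha_V)^\top\in\mathbb{R}^V$ define $$h(\boldsymbol{\alpha})=\max_{\mathbf{P}\in\Delta^n_m}\ \lambda\sum_{v=1}^V\alpha_v^2\,\mathrm{Tr}\big(\mathbf{P}^\top\mathbf{Z}_v\mathbf{T}_v\big)-\beta_\lambda\|\mathbf{P}\|_F^2-\sum_{i=1}^n\sum_{j=1}^m H_{ij}P_{ij}.$$ Then $h$ is differentiable at every $\boldsymbol{\alpha}$ with $\boldsymbol{\alpha}^\top\in\Delta^1_V$, and for each $v$, $$\frac{\partial h(\boldsymbol{\alpha})}{\partial\alpha_v}=2\lambda\alpha_v\,\mathrm{Tr}\big(\mathbf{P}^{\star\top}\mathbf{Z}_v\mathbf{T}_v\big),$$ where $\mathbf{P}^\star$ is the (unique) maximizer of the inner maximization problem at $\boldsymbol{\alpha}$.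
   Context: For positive integers $a,b$, $\Delta^a_b=\{\zeta\in\mathbb{R}^{a\times b}:\zeta\mathbf{1}_b=\mathbf{1}_a,\ \zeta\ge 0\}$ denotes the set of $a\times b$ nonnegative matrices whose rows each sum to $1$; in particular $\boldsymbol{\alpha}^\top\in\Delta^1_V$ means $\boldsymbol{\alpha}$ lies in the probability simplex of $\mathbb{R}^V$. $\|\cdot\|_F$ is the Frobenius norm. In the paper's setting, $H_{ij}=\|\mathbf{F}_{i\cdot}/\sqrt{d_i}-\mathbf{Q}_{j\cdot}/\sqrt{d_{n+j}}\|_2^2$ for soft label matrices $\mathbf{F}\in\mathbb{R}^{n\times c}$, $\mathbf{Q}\in\mathbb{R}^{m\times c}$ and graph degrees $d_k$, and this matrix is held fixed in the inner problem. *)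

From HB Require Import structures.
From mathcomp Require Import all_boot all_order all_algebra.
From mathcomp Require Import all_classical all_reals all_analysis.
Set Implicit Arguments. Unset Strict Implicit. Unset Printing Implicit Defensive.
Import Order.TTheory GRing.Theory Num.Theory.
Import numFieldNormedType.Exports.
Local Open Scope ring_scope.

Definition rowstoch (R : realType) (a b : nat) (Z : 'M[R]_(a, b)) : Prop :=
  (forall i j, 0 <= Z i j) /\ (forall i, \sum_(j < b) Z i j = 1).

Definition frob2 (R : realType) (a b : nat) (P : 'M[R]_(a, b)) : R :=
  \sum_(i < a) \sum_(j < b) P i j ^+ 2.

Definition inner_obj (R : realType) (n m V : nat) (lam beta : R)
  (Z : 'I_V -> 'M[R]_(n, m)) (T : 'I_V -> 'M[R]_m) (H : 'M[R]_(n, m))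
  (alpha : 'cV[R]_V) (P : 'M[R]_(n, m)) : R :=
  lam * (\sum_(v < V) alpha v 0 ^+ 2 * \tr (P^T *m Z v *m T v))
  - beta * frob2 P
  - \sum_(i < n) \sum_(j < m) H i j * P i j.

(* h(alpha) = max over P in Delta^n_m of the inner objective (written as sup;
   the max is attained since Delta^n_m is compact and the objective continuous) *)
Definition hfun (R : realType) (n m V : nat) (lam beta : R)
  (Z : 'I_V -> 'M[R]_(n, m)) (T : 'I_V -> 'M[R]_m) (H : 'M[R]_(n, m))
  (alpha : 'cV[R]_V) : R :=
  sup [set inner_obj lam beta Z T H alpha P | P in [set P | rowstoch P]]%classic.

Definition is_maximizer (R : realType) (n m V : nat) (lam beta : R)
  (Z : 'I_V -> 'M[R]_(n, m)) (T : 'I_V -> 'M[R]_m) (H : 'M[R]_(n, m))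
  (alpha : 'cV[R]_V) (P : 'M[R]_(n, m)) : Prop :=
  rowstoch P /\ forall Q, rowstoch Q ->
    inner_obj lam beta Z T H alpha Q <= inner_obj lam beta Z T H alpha P.

(* For fixed alpha the inner objective is <P, K(alpha)> - beta |P|_F^2 with
   K(alpha) = lam sum_v alpha_v^2 Z_v T_v - H, a beta-strongly concave function
   of P on the compact convex set Delta^n_m.  Strong concavity gives a unique
   maximiser P0 together with the quadratic growth
   F(Q) <= F(P0) - beta |Q - P0|_F^2, and with Young's inequality this yields
   the Danskin-type estimate
   |max F_K - max F_K0 - <P0, K - K0>| <= |K - K0|_F^2 / (4 beta).
   Since alpha |-> K(alpha) is quadratic, h(alpha + d) - h(alpha) differs from
   sum_v 2 lam alpha_v <P0, Z_v T_v> d_v by O(|d|^2). *)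

From HB Require Import structures.
From mathcomp Require Import all_boot all_order all_algebra.
From mathcomp Require Import all_classical all_reals all_analysis.
From mathcomp Require Import ring lra.
Set Implicit Arguments. Unset Strict Implicit. Unset Printing Implicit Defensive.
Import Order.TTheory GRing.Theory Num.Theory.
Import numFieldNormedType.Exports.
Local Open Scope ring_scope.

Section RealInequalities.
Variable R : realFieldType.

Lemma concave_quadratic_slope_le0 (a b : R) : 0 <= b ->
  (forall t, 0 < t <= 1 -> t * a - t ^+ 2 * b <= 0) -> a <= 0.
Proof.
move=> b_ge0 hq; rewrite leNgt; apply/negP => a_gt0.
have ab_gt0 : 0 < a + 2 * b by lra.
pose t := a / (a + 2 * b).
have t_gt0 : 0 < t by rewrite divr_gt0.
have t_le1 : t <= 1 by rewrite ler_pdivrMr // mul1r; lra.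
have tE : t * (a + 2 * b) = a by rewrite divfK // gt_eqF.
have value_pos : t * a - t ^+ 2 * b = t ^+ 2 * (a + b) by rewrite -{1}tE; ring.
have := hq t; rewrite t_gt0 t_le1 value_pos pmulr_rle0 ?exprn_gt0 //.
by move=> /(_ isT); lra.
Qed.

Lemma young_sqr (beta x y : R) : 0 < beta ->
  x * y - beta * y ^+ 2 <= x ^+ 2 / (4 * beta).
Proof.
move=> beta_gt0; have beta4_gt0 : 0 < 4 * beta by rewrite mulr_gt0.
have -> : x * y - beta * y ^+ 2 =
    x ^+ 2 / (4 * beta) - (2 * beta * y - x) ^+ 2 / (4 * beta).
  by field; rewrite gt_eqF.
by rewrite gerBl divr_ge0 ?sqr_ge0 // ltW.
Qed.

End RealInequalities.

Lemma mx_entry_le_norm (R : realFieldType) (p q : nat) (A : 'M[R]_(p, q)) i j :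
  `|A i j| <= `|A|.
Proof.
by rewrite [leRHS]/Num.Def.normr /= mx_normrE; apply/bigmax_geP; right; exists (i, j).
Qed.

Section FrobeniusProduct.
Variables (R : realType) (n m : nat).
Implicit Types A B P : 'M[R]_(n, m).

Definition dotm A B : R := \tr (A^T *m B).

Lemma dotmE A B : dotm A B = \sum_i \sum_j A i j * B i j.
Proof.
rewrite /dotm /mxtrace exchange_big; apply: eq_bigr => j _.
by rewrite !mxE; apply: eq_bigr => i _; rewrite mxE.
Qed.

Lemma dotmC A B : dotm A B = dotm B A.
Proof. by rewrite /dotm -mxtrace_tr trmx_mul trmxK. Qed.

Lemma dotmDr A B1 B2 : dotm A (B1 + B2) = dotm A B1 + dotm A B2.
Proof. by rewrite /dotm mulmxDr mxtraceD. Qed.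

Lemma dotmZr A c B : dotm A (c *: B) = c * dotm A B.
Proof. by rewrite /dotm -scalemxAr mxtraceZ. Qed.

Lemma dotmBr A B1 B2 : dotm A (B1 - B2) = dotm A B1 - dotm A B2.
Proof. by rewrite /dotm mulmxBr linearB. Qed.

Lemma dotm_sumr (I : finType) A (B : I -> 'M[R]_(n, m)) :
  dotm A (\sum_k B k) = \sum_k dotm A (B k).
Proof. by rewrite /dotm mulmx_sumr linear_sum. Qed.

Lemma dotmDl A1 A2 B : dotm (A1 + A2) B = dotm A1 B + dotm A2 B.
Proof. by rewrite !(dotmC _ B) dotmDr. Qed.

Lemma dotmZl c A B : dotm (c *: A) B = c * dotm A B.
Proof. by rewrite !(dotmC _ B) dotmZr. Qed.

Lemma dotmBl A1 A2 B : dotm (A1 - A2) B = dotm A1 B - dotm A2 B.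
Proof. by rewrite !(dotmC _ B) dotmBr. Qed.

Lemma frob2E A : frob2 A = dotm A A.
Proof. by rewrite dotmE; apply: eq_bigr => i _; apply: eq_bigr => j _; rewrite expr2. Qed.

Lemma frob2_ge0 A : 0 <= frob2 A.
Proof. by apply: sumr_ge0 => i _; apply: sumr_ge0 => j _; apply: sqr_ge0. Qed.

Lemma frob2_eq0 A : frob2 A = 0 -> A = 0.
Proof.
move=> /eqP; rewrite psumr_eq0 => [/allP A0|i _]; last first.
  by apply: sumr_ge0 => j _; apply: sqr_ge0.
apply/matrixP => i j; have /implyP/(_ isT) := A0 i (mem_index_enum i).
rewrite psumr_eq0 => [/allP/(_ j (mem_index_enum j))|k _]; last exact: sqr_ge0.
by rewrite mxE sqrf_eq0 => /eqP.
Qed.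

Lemma frob2_le_norm A : frob2 A <= (n * m)%:R * `|A| ^+ 2.
Proof.
have -> : (n * m)%:R = \sum_(p : 'I_n * 'I_m) (1 : R).
  by rewrite sumr_const card_prod !card_ord.
rewrite /frob2 mulr_suml pair_big; apply: ler_sum => -[i j] _.
rewrite mul1r /= -real_normK ?num_real //.
by rewrite lerXn2r ?nnegrE ?mx_entry_le_norm.
Qed.

End FrobeniusProduct.

Lemma sum_sqr_coord_le (R : realFieldType) (k : nat) (c : 'I_k -> R) (d : 'cV[R]_k) :
  `|\sum_v c v * d v 0 ^+ 2| <= `|d| ^+ 2 * \sum_v `|c v|.
Proof.
rewrite mulr_sumr; apply: le_trans (ler_norm_sum _ _ _) _; apply: ler_sum => v _.
rewrite normrM normrX mulrC ler_wpM2r //.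
by rewrite lerXn2r ?nnegrE ?mx_entry_le_norm.
Qed.

Section StronglyConcaveMaximum.
Variables (R : realType) (n m : nat) (beta : R) (C : set 'M[R]_(n, m)).
Hypothesis beta_gt0 : 0 < beta.
Hypothesis convex_C : forall P Q t, C P -> C Q -> 0 <= t <= 1 -> C (P + t *: (Q - P)).
Implicit Types K P Q : 'M[R]_(n, m).
Local Open Scope classical_set_scope.

Definition quad_obj K P : R := dotm P K - beta * frob2 P.

Definition is_argmax K P : Prop := C P /\ forall Q, C Q -> quad_obj K Q <= quad_obj K P.

Definition maxval K : R := sup [set quad_obj K P | P in C].

Lemma quad_obj_growth K P Q : is_argmax K P -> C Q ->
  quad_obj K Q <= quad_obj K P - beta * frob2 (Q - P).
Proof.
move=> [CP maxP] CQ.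
have expand t D : quad_obj K (P + t *: D) =
    quad_obj K P + t * (dotm D K - 2 * beta * dotm P D) - t ^+ 2 * (beta * frob2 D).
  by rewrite /quad_obj !frob2E !(dotmDl, dotmDr, dotmZl, dotmZr) (dotmC D P); ring.
have slope_le0 : dotm (Q - P) K - 2 * beta * dotm P (Q - P) <= 0.
  apply: (concave_quadratic_slope_le0 (b := beta * frob2 (Q - P))).
    by rewrite mulr_ge0 ?frob2_ge0 ?ltW.
  move=> t /andP[t0 t1]; have t01 : 0 <= t <= 1 by rewrite ltW.
  by have := maxP _ (convex_C CP CQ t01); rewrite expand; lra.
by have := expand 1 (Q - P); rewrite scale1r subrKC => ->; lra.
Qed.

Lemma argmax_unique K P1 P2 : is_argmax K P1 -> is_argmax K P2 -> P1 = P2.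
Proof.
move=> [CP1 maxP1] max2; have growth := quad_obj_growth max2 CP1.
have le21 := maxP1 _ max2.1; have fr_ge0 := frob2_ge0 (P1 - P2).
have fr_eq0 : frob2 (P1 - P2) = 0.
  apply/eqP; rewrite eq_le fr_ge0 andbT -(pmulr_rle0 _ beta_gt0); lra.
by apply/eqP; rewrite -subr_eq0; apply/eqP/frob2_eq0.
Qed.

Lemma quad_obj_le_perturbed K0 K P Q : is_argmax K0 P -> C Q ->
  quad_obj K Q <= quad_obj K0 P + dotm P (K - K0) + frob2 (K - K0) / (4 * beta).
Proof.
move=> maxP CQ; have := quad_obj_growth maxP CQ.
have young : dotm (Q - P) (K - K0) - beta * frob2 (Q - P) <= frob2 (K - K0) / (4 * beta).
  rewrite frob2E !dotmE /frob2 mulr_sumr -sumrB mulr_suml; apply: ler_sum => i _.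
  rewrite mulr_sumr -sumrB mulr_suml; apply: ler_sum => j _.
  by rewrite !mxE mulrC young_sqr.
by move: young; rewrite /quad_obj !(dotmBl, dotmBr); lra.
Qed.

Lemma maxvalE K P : is_argmax K P -> maxval K = quad_obj K P.
Proof.
move=> [CP maxP]; have nonempty : [set quad_obj K Q | Q in C] !=set0.
  by exists (quad_obj K P), P.
have ubound_P : ubound [set quad_obj K Q | Q in C] (quad_obj K P).
  by move=> _ [Q CQ <-]; exact: maxP.
apply/eqP; rewrite eq_le ge_sup //=.
by apply: sup_upper_bound; [split; last exists (quad_obj K P) | exists P].
Qed.

Lemma maxval_expansion K0 K P : is_argmax K0 P ->
  `|maxval K - maxval K0 - dotm P (K - K0)| <= frob2 (K - K0) / (4 * beta).
Proof.
move=> maxP; rewrite (maxvalE maxP); have [CP _] := maxP.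
set bound := quad_obj K0 P + dotm P (K - K0) + frob2 (K - K0) / (4 * beta).
have nonempty : [set quad_obj K Q | Q in C] !=set0.
  by exists (quad_obj K P), P.
have ubound_bound : ubound [set quad_obj K Q | Q in C] bound.
  by move=> _ [Q CQ <-]; exact: quad_obj_le_perturbed.
have upper : maxval K <= bound by exact: ge_sup.
have lower : quad_obj K P <= maxval K.
  by apply: sup_upper_bound; [split; last exists bound | exists P].
have shift : quad_obj K P = quad_obj K0 P + dotm P (K - K0).
  by rewrite /quad_obj dotmBr; ring.
have := frob2_ge0 (K - K0); move: upper lower; rewrite /bound shift ler_norml.
by move=> upper lower fr_ge0; apply/andP; split; lra.
Qed.

End StronglyConcaveMaximum.

Section RowStochastic.
Variables (R : realType) (n m : nat).
Implicit Types P Q : 'M[R]_(n, m).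
Local Open Scope classical_set_scope.

Lemma rowstoch_convex P Q t : rowstoch P -> rowstoch Q -> 0 <= t <= 1 ->
  rowstoch (P + t *: (Q - P)).
Proof.
move=> [P0 P1] [Q0 Q1] /andP[t0 t1]; split => [i j | i].
  rewrite !mxE (_ : _ + _ = (1 - t) * P i j + t * Q i j); last by ring.
  by rewrite addr_ge0 // mulr_ge0 // subr_ge0.
under eq_bigr do rewrite !mxE.
by rewrite big_split /= -mulr_sumr sumrB P1 Q1 subrr mulr0 addr0.
Qed.

Let vec_entry i j (v : 'rV[R]_(n * m)) : R := (vec_mx v : 'M[R]_(n, m)) i j.

Let vec_entry_continuous i j : continuous (vec_entry i j).
Proof. by rewrite /vec_entry; under eq_fun do rewrite mxE; exact: coord_continuous. Qed.

Let continuous_sum (I : finType) (F : I -> 'rV[R]_(n * m) -> R) :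
  (forall k, continuous (F k)) -> continuous (fun v => \sum_k F k v).
Proof. by move=> F_cont; apply: continuous_big => //; exact: add_continuous. Qed.

Lemma rowstoch_entry_le1 P i j : rowstoch P -> P i j <= 1.
Proof.
move=> [P0 P1]; rewrite -(P1 i) (bigD1 j) //= lerDl.
by apply: sumr_ge0 => k _.
Qed.

Lemma rowstoch_vec_compact : compact [set v : 'rV[R]_(n * m) | rowstoch (vec_mx v)].
Proof.
apply: bounded_closed_compact.
  exists 1; split; first exact: num_real.
  move=> M M1 v stoch_v; apply: (le_trans _ (ltW M1)).
  rewrite [leLHS]/Num.Def.normr /= mx_normrE; apply: bigmax_le => // -[i k] _ /=.
  case/mxvec_indexP: k => a b; rewrite (_ : v i _ = vec_mx v a b); last by rewrite mxE ord1.
  by rewrite ger0_norm ?rowstoch_entry_le1 //; case: stoch_v.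
rewrite (_ : [set v | _] =
    \bigcap_(p in [set: 'I_n * 'I_m]) (vec_entry p.1 p.2 @^-1` [set x | 0 <= x]) `&`
    \bigcap_(i in [set: 'I_n]) ((fun v => \sum_j vec_entry i j v) @^-1` [set 1])).
  apply: closedI; apply: closed_bigI => p _; apply: preimage_closed.
  - by move=> v _; exact: vec_entry_continuous.
  - exact: closed_ge.
  - by move=> v _; apply: continuous_sum => j; exact: vec_entry_continuous.
  - exact: closed_eq.
apply/seteqP; split => v.
  by move=> [v0 v1]; split => [[i j] _ | i _]; [exact: v0 | exact: v1].
by move=> [v0 v1]; split => [i j | i]; [exact: (v0 (i, j)) | exact: v1].
Qed.

Lemma rowstoch_argmax_exists (beta : R) (K : 'M[R]_(n, m)) : (0 < m)%N ->
  exists P, is_argmax beta [set P | rowstoch P] K P.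
Proof.
move=> m_gt0.
have nonempty : [set v : 'rV[R]_(n * m) | rowstoch (vec_mx v)] !=set0.
  exists (mxvec (const_mx m%:R^-1)); rewrite /= mxvecK.
  split => [i j | i]; first by rewrite mxE invr_ge0.
  under eq_bigr do rewrite mxE.
  by rewrite sumr_const card_ord -[LHS]mulr_natr mulVf // pnatr_eq0 -lt0n.
pose f v := quad_obj beta K (vec_mx v).
have f_cont : continuous f.
  have -> : f = fun v => \sum_i \sum_j
      ((vec_entry i j \* cst (K i j)) - (cst beta \* (vec_entry i j \* vec_entry i j))) v.
    apply: funext => v; rewrite /f /quad_obj dotmE /frob2 mulr_sumr -sumrB.
    apply: eq_bigr => i _; rewrite mulr_sumr -sumrB.
    by apply: eq_bigr => j _; rewrite /= expr2.
  apply: continuous_sum => i; apply: continuous_sum => j v.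
  have entry_cont := @vec_entry_continuous i j v.
  apply: continuousB; apply: continuousM => //; try exact: cst_continuous.
  exact: continuousM.
have [v stoch_v v_max] :=
  compact_EVT_max nonempty rowstoch_vec_compact (continuous_subspaceT f_cont).
exists (vec_mx v); split => [|Q stoch_Q]; first by move: stoch_v; rewrite inE.
by have := v_max (mxvec Q); rewrite /f mxvecK; apply; rewrite inE /= mxvecK.
Qed.

End RowStochastic.

Lemma differentiable_quadratic_remainder (R : realFieldType) (V : normedModType R)
    (f : V -> R) (L : {linear V -> R}) (x : V) (C : R) :
  continuous L ->
  (forall d, `|d| <= 1 -> `|f (d + x) - f x - L d| <= C * `|d| ^+ 2) ->
  differentiable f x /\ 'd f x = L :> (V -> R).
Proof.
move=> L_cont remainder.
have little_o : f \o shift x = cst (f x) + L +o_ (0 : V) id.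
  apply/eqaddoP => eps eps_gt0.
  have e_gt0 : 0 < eps / (`|C| + 1) by rewrite divr_gt0 // ltr_wpDl.
  near=> d.
  change (`|f (d + x) - (f x + L d)| <= eps * `|d|).
  have d_le1 : `|d| <= 1 by near: d; exact: nbhs0_le.
  have d_small : `|d| <= eps / (`|C| + 1) by near: d; exact: nbhs0_le.
  have Cd_le : (`|C| + 1) * `|d| <= eps by rewrite mulrC -ler_pdivlMr // ltr_wpDl.
  rewrite opprD addrA; apply: le_trans (remainder d d_le1) _.
  have := normr_ge0 d; have := ler_norm C; nra.
have dfE := diff_unique L_cont little_o.
by split => //; apply/diff_locallyP; rewrite dfE.
Unshelve. all: by end_near.
Qed.

Section CoordinateForm.
Variables (R : realType) (k : nat) (c : 'I_k -> R).

Definition coord_dot (d : 'cV[R]_k) : R := \sum_v c v * d v 0.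

Lemma coord_dot_is_linear : linear coord_dot.
Proof.
move=> a d e; rewrite /coord_dot scaler_sumr -big_split; apply: eq_bigr => v _.
by rewrite !mxE /= mulrDr mulrCA.
Qed.

HB.instance Definition _ :=
  GRing.isLinear.Build R 'cV[R]_k R *:%R coord_dot coord_dot_is_linear.

Lemma coord_dot_continuous : continuous coord_dot.
Proof.
apply: continuous_big => //; first exact: add_continuous.
move=> v _ d; apply: (@continuousM _ _ (cst (c v)) (fun d : 'cV[R]_k => d v 0)).
  exact: cst_continuous.
exact: coord_continuous.
Qed.

Lemma coord_dot_delta v : coord_dot (delta_mx v 0) = c v.
Proof.
rewrite /coord_dot (bigD1 v) //= mxE !eqxx mulr1 big1 ?addr0 // => u /negbTE.
by rewrite mxE eq_sym => ->; rewrite mulr0.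
Qed.

End CoordinateForm.

Section InnerProblem.
Variables (R : realType) (n m V : nat) (lam beta : R)
  (Z : 'I_V -> 'M[R]_(n, m)) (T : 'I_V -> 'M[R]_m) (H : 'M[R]_(n, m)).

Local Notation stoch := [set P : 'M[R]_(n, m) | rowstoch P]%classic.
Local Notation h := (hfun lam beta Z T H).

Definition ZT v : 'M[R]_(n, m) := Z v *m T v.

Definition obj_coef (a : 'cV[R]_V) : 'M[R]_(n, m) :=
  \sum_v (lam * a v 0 ^+ 2) *: ZT v - H.

Definition hgrad (P : 'M[R]_(n, m)) (a : 'cV[R]_V) (v : 'I_V) : R :=
  2 * lam * a v 0 * \tr (P^T *m Z v *m T v).

Lemma tr_ZT P v : \tr (P^T *m Z v *m T v) = dotm P (ZT v).
Proof. by rewrite /dotm /ZT mulmxA. Qed.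

Lemma inner_objE a P : inner_obj lam beta Z T H a P = quad_obj beta (obj_coef a) P.
Proof.
have H_term : \sum_i \sum_j H i j * P i j = dotm P H.
  by rewrite dotmE; apply: eq_bigr => i _; apply: eq_bigr => j _; rewrite mulrC.
have ZT_term : lam * \sum_v a v 0 ^+ 2 * \tr (P^T *m Z v *m T v) =
    \sum_v dotm P ((lam * a v 0 ^+ 2) *: ZT v).
  by rewrite mulr_sumr; apply: eq_bigr => v _; rewrite dotmZr tr_ZT mulrA.
rewrite /inner_obj /quad_obj /obj_coef dotmBr dotm_sumr -ZT_term H_term; ring.
Qed.

Lemma hfunE a : h a = maxval beta stoch (obj_coef a).
Proof. by rewrite /hfun /maxval; congr sup; apply: eq_imagel => P _; exact: inner_objE. Qed.

Lemma is_maximizerE a P :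
  is_maximizer lam beta Z T H a P <-> is_argmax beta stoch (obj_coef a) P.
Proof.
by split=> -[stoch_P maxP]; split => // Q stoch_Q;
  [rewrite -!inner_objE | rewrite !inner_objE]; exact: maxP.
Qed.

Lemma obj_coef_increment a d : obj_coef (d + a) - obj_coef a =
  \sum_v (lam * (d v 0 * (d v 0 + 2 * a v 0))) *: ZT v.
Proof.
rewrite /obj_coef opprB addrA subrK -sumrB; apply: eq_bigr => v _.
by rewrite -scalerBl !mxE; congr (_ *: _); ring.
Qed.

Lemma dotm_obj_coef_increment P a d :
  dotm P (obj_coef (d + a) - obj_coef a) - coord_dot (hgrad P a) d =
  \sum_v lam * dotm P (ZT v) * d v 0 ^+ 2.
Proof.
rewrite obj_coef_increment dotm_sumr /coord_dot -sumrB; apply: eq_bigr => v _.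
by rewrite dotmZr /hgrad tr_ZT; ring.
Qed.

Lemma norm_obj_coef_increment a d : `|d| <= 1 ->
  `|obj_coef (d + a) - obj_coef a| <=
  `|d| * \sum_v `|lam| * (1 + 2 * `|a v 0|) * `|ZT v|.
Proof.
move=> d_le1; rewrite obj_coef_increment mulr_sumr.
apply: le_trans (ler_norm_sum _ _ _) _; apply: ler_sum => v _.
have dv_le : `|d v 0| <= `|d| := mx_entry_le_norm d v 0.
have shift_le : `|d v 0 + 2 * a v 0| <= 1 + 2 * `|a v 0|.
  apply: le_trans (ler_normD _ _) _.
  by rewrite normrM ger0_norm // lerD2r (le_trans dv_le).
rewrite normrZ !normrM.
rewrite [leLHS](_ : _ = `|d v 0| * `|d v 0 + 2 * a v 0| * (`|lam| * `|ZT v|)); last by ring.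
rewrite [leRHS](_ : _ = `|d| * (1 + 2 * `|a v 0|) * (`|lam| * `|ZT v|)); last by ring.
by rewrite ler_wpM2r ?mulr_ge0 // ler_pM.
Qed.

Hypothesis beta_gt0 : 0 < beta.

Lemma hfun_quadratic_remainder a P : is_argmax beta stoch (obj_coef a) P ->
  exists C, forall d, `|d| <= 1 ->
    `|h (d + a) - h a - coord_dot (hgrad P a) d| <= C * `|d| ^+ 2.
Proof.
move=> maxP.
set c1 := \sum_v `|lam| * (1 + 2 * `|a v 0|) * `|ZT v|.
set c2 := \sum_v `|lam * dotm P (ZT v)|.
exists ((n * m)%:R * c1 ^+ 2 / (4 * beta) + c2) => d d_le1.
set dK := obj_coef (d + a) - obj_coef a.
have -> : h (d + a) - h a - coord_dot (hgrad P a) d =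
    (maxval beta stoch (obj_coef (d + a)) - maxval beta stoch (obj_coef a) - dotm P dK)
    + (dotm P dK - coord_dot (hgrad P a) d).
  by rewrite !hfunE; ring.
apply: le_trans (ler_normD _ _) _; rewrite mulrDl; apply: lerD.
  apply: le_trans (maxval_expansion beta_gt0 (@rowstoch_convex R n m) _ maxP) _.
  rewrite mulrAC ler_pM2r ?invr_gt0 ?mulr_gt0 //.
  apply: le_trans (frob2_le_norm dK) _; rewrite -mulrA ler_wpM2l // -exprMn mulrC.
  by rewrite lerXn2r ?nnegrE ?norm_obj_coef_increment ?mulr_ge0 ?sumr_ge0.
rewrite dotm_obj_coef_increment mulrC; exact: sum_sqr_coord_le.
Qed.

End InnerProblem.

Theorem theorem1 (R : realType) (n m V : nat) (lam beta : R)
  (Z : 'I_V -> 'M[R]_(n, m)) (T : 'I_V -> 'M[R]_m) (H : 'M[R]_(n, m))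
  (alpha : 'cV[R]_V) :
  (0 < n)%N -> (0 < m)%N -> (0 < V)%N -> 0 < lam -> 0 < beta ->
  (forall v, rowstoch (Z v)) ->
  (forall v, (T v)^T *m T v = 1%:M) ->
  (forall i j, 0 <= H i j) ->
  rowstoch (alpha^T) ->
  differentiable (hfun lam beta Z T H) alpha /\
  (exists! P, is_maximizer lam beta Z T H alpha P) /\
  (forall P, is_maximizer lam beta Z T H alpha P ->
     forall v : 'I_V,
       'D_(delta_mx v 0) (hfun lam beta Z T H) alpha
       = 2 * lam * alpha v 0 * \tr (P^T *m Z v *m T v)).
Proof.
move=> _ m_gt0 _ _ beta_gt0 _ _ _ _.
have [P0 maxP0] := rowstoch_argmax_exists beta (obj_coef lam Z T H alpha) m_gt0.
have [C remainder] := hfun_quadratic_remainder beta_gt0 maxP0.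
have [h_diff dhE] :=
  differentiable_quadratic_remainder (@coord_dot_continuous _ _ _) remainder.
have unique P : is_maximizer lam beta Z T H alpha P -> P = P0.
  move=> /is_maximizerE maxP.
  exact: argmax_unique beta_gt0 (@rowstoch_convex R n m) _ _ _ maxP maxP0.
split => //; split.
  by exists P0; split => [|P /unique ->]; first exact/is_maximizerE.
by move=> P /unique -> v; rewrite deriveE // dhE /= coord_dot_delta.
Qed.
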